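(* Let $B\in\mathbb{R}^{m\times m}$ be symmetric positive definite with eigenvalues $0<\lambda_1\le\lambda_2\le\cdots\le\lambda_m\le 1$ and corresponding orthonormal eigenvectors $u_1,\dots,u_m$. Let $1\le k<m$ and assume $\lambda_k\le 1/2$. For $1\le j\le k$ set $$\gamma_{j,k}=\frac{\lambda_{k+1}^{-1}-1}{\lambda_j^{-1}-1}\quad(\text{so }0\le\gamma_{j,k}\le 1).$$ Let $p\ge 2$ and $q\ge 0$ be integers, and let $\widetilde U\in\mathbb{R}^{m\times(k+p)}$ be a random matrix which almost surely has full column rank, and let $c\ge 0$ be a random variable, such that almost surely $$\|u_j-\Pi_{\widetilde U}u_j\|_2\le \gamma_{j,k}^{\,q+1}\,c\qquad\text{for all } j=1,\dots,k,$$ where $\Pi_{\widetilde U}$ is the orthogonal projector onto the column space of $\widetilde U$, and such that $$\mathbb{E}(c)=\sqrt{\frac{k}{p-1}}+\frac{e\sqrt{(k+p)(m-k)}}{p}.$$ Define $E=\widetilde U^\top B\widetilde U$ and the deflation preconditioner $\mathcal{P}=I-B\widetilde U E^{-1}\widetilde U^\top$. Then $$\mathbb{E}\Big(\sqrt{\kappa_{\mathrm{eff}}(\mathcal{P}B)}\Big)\le c_1\sqrt{\frac{\lambda_m}{\lambda_{k+1}}},$$ where $c_1$ depends only on $k$, $p$ and $m$ (not on the eigenvalues of $B$), and $c_1^2$ is bounded above by a polynomial of degree at most $3$ in $k$ (with coefficients depending only on $p$ and $m$).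
   Context: In the paper, $B=I-H=R_\Gamma^{-\top}S_\Gamma R_\Gamma^{-1}$, where $S_\Gamma$ is a Schur complement, $A_\Gamma=R_\Gamma^\top R_\Gamma$ is a Cholesky factorization, and $\widetilde U$ is produced by Nyström's randomized low-rank approximation with oversampling $p$ and $q$ power iterations; the almost-sure angle bound with the stated $\mathbb{E}(c)$ is the assumed property of that randomized method. $e$ denotes Euler's number. The matrix $\mathcal{P}B=B-B\widetilde U E^{-1}\widetilde U^\top B$ is symmetric positive semidefinite, and its effective condition number $\kappa_{\mathrm{eff}}(\mathcal{P}B)$ is the ratio of its largest eigenvalue to its smallest nonzero eigenvalue. *)

From HB Require Import structures.
From mathcomp Require Import all_boot all_order all_algebra.
From mathcomp Require Import all_classical all_reals all_analysis.
Set Implicit Arguments. Unset Strict Implicit. Unset Printing Implicit Defensive.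
Import Order.TTheory GRing.Theory Num.Theory.
Local Open Scope ring_scope.
Local Open Scope classical_set_scope.

Section Defs.
Variable R : realType.

Definition norm2 {m : nat} (v : 'cV[R]_m) : R := Num.sqrt (\sum_i (v i 0) ^+ 2).

Definition proj_col {m n : nat} (U : 'M[R]_(m, n)) : 'M[R]_m :=
  U *m invmx (U^T *m U) *m U^T.

Definition defl_prec {m n : nat} (B : 'M[R]_m) (U : 'M[R]_(m, n)) : 'M[R]_m :=
  1%:M - B *m U *m invmx (U^T *m B *m U) *m U^T.

Definition kappa_eff {m : nat} (A : 'M[R]_m) : R :=
  sup [set a | eigenvalue A a] / inf [set a | eigenvalue A a /\ a != 0].

(* gamma_{j,k} = (lambda_{k+1}^{-1} - 1) / (lambda_j^{-1} - 1), 1-based indices *)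
Definition gammajk (lambda : nat -> R) (j k : nat) : R :=
  ((lambda k.+1)^-1 - 1) / ((lambda j)^-1 - 1).

End Defs.

From HB Require Import structures.
From mathcomp Require Import all_boot all_order all_algebra.
From mathcomp Require Import all_classical all_reals all_analysis.
From mathcomp Require Import measurable_realfun ring lra.
Import Order.TTheory GRing.Theory Num.Theory.
Import HBNNSimple.
Local Open Scope ring_scope.
Local Open Scope classical_set_scope.

(* Write S(v) = v v^T and T(v) = v B^{-1} v^T for row vectors v.
   1. If v (P B) = a v with a <> 0, then v U = 0 and S(v) = a T(v); hence every
      nonzero eigenvalue of P B is a Rayleigh-type quotient a = S(v) / T(v).
   2. In the orthonormal eigenbasis, S(v) = sum_j t_j^2 and T(v) = sum_j t_j^2 / l_j
      with t_j = v u_j.  Since v U = 0, t_j = v (u_j - Pi_U u_j), so by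
      Cauchy-Schwarz t_j^2 <= S(v) min(1, |u_j - Pi_U u_j|^2) <= S(v) gamma_j c for
      j <= k, and gamma_j / l_j <= 2 / l_{k+1} because l_k <= 1/2.
   3. Therefore S/l_m <= T <= S (1 + 2 m c) / l_{k+1}, every nonzero eigenvalue lies
      in [l_{k+1} / (1 + 2 m c), l_m], and
      sqrt (kappa_eff (P B)) <= (1 + m c) sqrt (l_m / l_{k+1}).
   4. This bound is affine in c, so taking expectations gives the claim with
      c_1 = 1 + m E(c); the integral of sqrt kappa_eff is bounded without any
      measurability assumption on it, through simple functions below it.
   5. Finally c_1^2 is bounded by an explicit polynomial of degree one in k. *)

Lemma sum_sqr_ge0 {R : realDomainType} {m : nat} (f : 'I_m -> R) :
  0 <= \sum_i f i ^+ 2.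
Proof. by apply: sumr_ge0 => i _; exact: sqr_ge0. Qed.

Lemma sum_sqr_lincomb {R : comPzRingType} {m : nat} (a b : R) (f g : 'I_m -> R) :
  \sum_i (a * f i - b * g i) ^+ 2 =
  a ^+ 2 * \sum_i f i ^+ 2 - 2 * a * b * \sum_i (f i * g i)
  + b ^+ 2 * \sum_i g i ^+ 2.
Proof. by rewrite !mulr_sumr -sumrB -big_split /=; apply: eq_bigr => i _; ring. Qed.

(* Cauchy-Schwarz inequality for finite sums: expand |W f - X g|^2 >= 0. *)
Lemma cauchy_schwarz_sum {R : realFieldType} {m : nat} (f g : 'I_m -> R) :
  (\sum_i (f i * g i)) ^+ 2 <= (\sum_i f i ^+ 2) * (\sum_i g i ^+ 2).
Proof.
set V := \sum_i f i ^+ 2; set X := \sum_i (f i * g i); set W := \sum_i g i ^+ 2.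
have [W0|W_neq0] := eqVneq W 0.
  have g0 i : g i = 0.
    apply/eqP; rewrite -sqrf_eq0; apply/eqP.
    by move/psumr_eq0P: W0 => -> // j _; exact: sqr_ge0.
  rewrite /X big1 ?expr0n /= ?mulr_ge0 ?sum_sqr_ge0 // => i _.
  by rewrite g0 mulr0.
have W_gt0 : 0 < W by rewrite lt_def W_neq0 sum_sqr_ge0.
have := sum_sqr_ge0 (fun i => W * f i - X * g i).
rewrite sum_sqr_lincomb -/V -/X -/W => expansion_ge0.
have : 0 <= W * (W * V - X ^+ 2) by lra.
by rewrite pmulr_rge0 // subr_ge0 mulrC.
Qed.

Lemma gamma_bounds {R : realFieldType} {x y : R} :
  0 < x -> x <= 2^-1 -> x <= y -> y <= 1 ->
  let gamma := (y^-1 - 1) / (x^-1 - 1) in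
  [/\ 0 <= gamma, gamma <= 1 & gamma / x <= 2 / y].
Proof.
move=> x_gt0 x_le_half x_le_y y_le1 /=.
have y_gt0 : 0 < y := lt_le_trans x_gt0 x_le_y.
have ge2 : 2 <= x^-1.
  by rewrite -[2]invrK lef_pV2 ?posrE ?invr_gt0.
have ge1 : 1 <= y^-1 by rewrite -invr1 lef_pV2 ?posrE.
have inv_le : y^-1 <= x^-1 by rewrite lef_pV2 ?posrE.
have den_gt0 : 0 < x^-1 - 1 by lra.
split; first by apply: divr_ge0; lra.
  by rewrite ler_pdivrMr //; lra.
rewrite mulrAC ler_pdivrMr //; nra.
Qed.

(* sqrt (1 + 2 t) <= 1 + t, which makes the final bound affine in c. *)
Lemma sqrt_1_add2_le {R : rcfType} (t : R) : 0 <= t ->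
  Num.sqrt (1 + 2 * t) <= 1 + t.
Proof.
move=> t_ge0; have h : 0 <= 1 + t by lra.
rewrite -[leRHS](ger0_norm h) -sqrtr_sqr ler_sqrt ?sqr_ge0 //.
have := sqr_ge0 t; rewrite sqrrD expr1n mul1r mulr2n; lra.
Qed.

Lemma sqr_add_le {R : realDomainType} (a b : R) : (a + b) ^+ 2 <= 2 * (a ^+ 2 + b ^+ 2).
Proof. have := sqr_ge0 (a - b); rewrite sqrrB sqrrD !mulr2n; lra. Qed.

Lemma row_sqnorm {R : pzRingType} {m : nat} (v : 'rV[R]_m) :
  (v *m v^T) 0 0 = \sum_j v 0 j ^+ 2.
Proof. by rewrite mxE; apply: eq_bigr => j _; rewrite !mxE expr2. Qed.

(* E = U^T B U is invertible when B is positive definite and U has full column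
   rank: a kernel vector z of E gives (U z)^T B (U z) = 0, hence U z = 0, z = 0. *)
Lemma galerkin_unit (R : realFieldType) (m n : nat) (B : 'M[R]_m) (U : 'M[R]_(m, n)) :
  (forall x : 'cV[R]_m, x != 0 -> 0 < (x^T *m B *m x) 0 0) -> \rank U = n ->
  U^T *m B *m U \in unitmx.
Proof.
move=> B_pd U_free; rewrite -row_free_unit -kermx_eq0; apply/eqP/row_matrixP => i.
set z := row i _.
have zE : z *m (U^T *m B *m U) = 0 by rewrite /z -row_mul mulmx_ker row0.
have UT_free : row_free U^T by rewrite /row_free mxrank_tr U_free.
rewrite row0; apply/eqP; rewrite -(mulmx_free_eq0 _ UT_free); apply/eqP.
apply/trmx_inj; rewrite trmx0 trmx_mul trmxK.
apply/eqP; apply: contraLR isT => /B_pd; rewrite !trmx_mul !trmxK.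
have -> : z *m U^T *m B *m (U *m z^T) = z *m (U^T *m B *m U) *m z^T.
  by rewrite !mulmxA.
by rewrite zE mul0mx mxE ltxx.
Qed.

Section Spectral.
Variables (R : realType) (m : nat).
Variables (B : 'M[R]_m) (lambda : nat -> R) (u : nat -> 'cV[R]_m).
Hypothesis eig_u : forall j, (1 <= j <= m)%N -> B *m u j = lambda j *: u j.
Hypothesis orthonormal_u : forall i j, (1 <= i <= m)%N -> (1 <= j <= m)%N ->
  (u i)^T *m u j = (i == j)%:R%:M.
Hypothesis lambda_gt0 : forall j, (1 <= j <= m)%N -> 0 < lambda j.

Definition eigbasis : 'M[R]_m := \matrix_(i, j) u j.+1 i 0.

Definition inv_spectral : 'M[R]_m :=
  eigbasis *m diag_mx (\row_j (lambda j.+1)^-1) *m eigbasis^T.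

Lemma eigbasis_orthogonal : eigbasis^T *m eigbasis = 1%:M.
Proof.
apply/matrixP => i j; rewrite !mxE.
have := congr1 (fun M : 'M[R]_1 => M 0 0)
  (@orthonormal_u i.+1 j.+1 (ltn_ord i) (ltn_ord j)).
rewrite !mxE /= eqSS mulr1n => <-.
by apply: eq_bigr => l _; rewrite !mxE.
Qed.

Lemma eigbasis_orthogonal_tr : eigbasis *m eigbasis^T = 1%:M.
Proof. exact: mulmx1C eigbasis_orthogonal. Qed.

Lemma mulmx_eigbasis :
  B *m eigbasis = eigbasis *m diag_mx (\row_j lambda j.+1).
Proof.
apply/matrixP => i j; rewrite mul_mx_diag !mxE.
have := congr1 (fun M : 'cV[R]_m => M i 0) (@eig_u j.+1 (ltn_ord j)).
rewrite !mxE mulrC => <-.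
by apply: eq_bigr => l _; rewrite !mxE.
Qed.

Lemma mulmx_inv_spectral : B *m inv_spectral = 1%:M.
Proof.
have diag_inv : diag_mx (\row_j lambda j.+1) *m diag_mx (\row_j (lambda j.+1)^-1)
    = 1%:M :> 'M[R]_m.
  rewrite mulmx_diag; apply/matrixP => i j; rewrite !mxE; case: eqP => // _.
  by rewrite mulr1n mulfV // gt_eqF // (@lambda_gt0 i.+1 (ltn_ord i)).
rewrite /inv_spectral !mulmxA mulmx_eigbasis -(mulmxA eigbasis) diag_inv.
by rewrite mulmx1 eigbasis_orthogonal_tr.
Qed.

Lemma inv_spectral_sym : inv_spectral^T = inv_spectral.
Proof. by rewrite /inv_spectral !trmx_mul trmxK tr_diag_mx mulmxA. Qed.

Lemma coord_eigbasis (v : 'rV[R]_m) (j : 'I_m) :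
  (v *m eigbasis) 0 j = (v *m u j.+1) 0 0.
Proof. by rewrite !mxE; apply: eq_bigr => l _; rewrite !mxE. Qed.

Lemma sqnorm_coord (v : 'rV[R]_m) :
  (v *m v^T) 0 0 = \sum_j (v *m eigbasis) 0 j ^+ 2.
Proof.
have -> : v *m v^T = (v *m eigbasis) *m (v *m eigbasis)^T.
  by rewrite trmx_mul -mulmxA (mulmxA eigbasis) eigbasis_orthogonal_tr mul1mx.
exact: row_sqnorm.
Qed.

Lemma inv_form_coord (v : 'rV[R]_m) :
  (v *m inv_spectral *m v^T) 0 0 =
  \sum_j (v *m eigbasis) 0 j ^+ 2 / lambda j.+1.
Proof.
have -> : v *m inv_spectral *m v^T =
    (v *m eigbasis) *m diag_mx (\row_j (lambda j.+1)^-1) *m (v *m eigbasis)^T.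
  by rewrite /inv_spectral trmx_mul !mulmxA.
rewrite mul_mx_diag mxE; apply: eq_bigr => j _; rewrite !mxE.
by rewrite expr2 mulrAC.
Qed.

Lemma eigvec_sqnorm (j : 'I_m) : \sum_i u j.+1 i 0 ^+ 2 = 1.
Proof.
have := congr1 (fun M : 'M[R]_1 => M 0 0)
  (@orthonormal_u j.+1 j.+1 (ltn_ord j) (ltn_ord j)).
rewrite !mxE !eqxx mulr1n => unit_norm.
rewrite -[RHS]/(true%:R : R) -unit_norm.
by apply: eq_bigr => l _; rewrite !mxE expr2.
Qed.

Section Deflation.
Variables (n : nat) (U : 'M[R]_(m, n)).
Hypothesis B_pd : forall x : 'cV[R]_m, x != 0 -> 0 < (x^T *m B *m x) 0 0.
Hypothesis U_free : \rank U = n.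

(* Step 1.  A left eigenvector v of P B for a nonzero eigenvalue a is orthogonal
   to the columns of U, since P B U = 0 gives a (v U) = v P B U = 0; and writing
   a v = y B with y = v P, it satisfies the Rayleigh identity S(v) = a T(v). *)
Lemma deflated_left_eigvec (a : R) (v : 'rV[R]_m) :
  v *m (defl_prec B U *m B) = a *: v -> a != 0 ->
  v *m U = 0 /\ v *m v^T = a *: (v *m inv_spectral *m v^T).
Proof.
move=> eig_v a_neq0.
set E := U^T *m B *m U.
set y := v - v *m B *m U *m invmx E *m U^T.
have yB : a *: v = y *m B.
  by rewrite -eig_v /defl_prec /y mulmxBl mulmxBr mul1mx mulmxBl !mulmxA.
have vU : v *m U = 0.
  suff : a *: (v *m U) == 0 by rewrite scalemx_eq0 (negbTE a_neq0) => /eqP.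
  apply/eqP; rewrite scalemxAl yB /y mulmxBl mulmxBl.
  have -> : v *m B *m U *m invmx E *m U^T *m B *m U
      = v *m B *m U *m (invmx E *m E) by rewrite /E !mulmxA.
  by rewrite mulVmx ?galerkin_unit // mulmx1 subrr.
split => //.
have -> : v *m v^T = v *m y^T.
  by rewrite /y linearB /= trmx_mul trmxK mulmxDr mulmxN mulmxA vU mul0mx subr0.
have -> : y = a *: (v *m inv_spectral).
  by rewrite scalemxAl yB -mulmxA mulmx_inv_spectral mulmx1.
by rewrite linearZ /= -scalemxAr trmx_mul inv_spectral_sym mulmxA.
Qed.

Section Approximation.
Variables (k q : nat) (c : R).
Hypothesis k_lt_m : (k < m)%N.
Hypothesis lambda_mono : forall i j, (1 <= i)%N -> (i <= j)%N -> (j <= m)%N ->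
  lambda i <= lambda j.
Hypothesis lambda_m_le1 : lambda m <= 1.
Hypothesis lambda_k_le_half : lambda k <= 2^-1.
Hypothesis approx_u : forall j, (1 <= j <= k)%N ->
  norm2 (u j - proj_col U *m u j) <= gammajk lambda j k ^+ q.+1 * c.
Hypothesis c_ge0 : 0 <= c.

Let coord (v : 'rV[R]_m) (j : 'I_m) := (v *m eigbasis) 0 j.
Let sqn (v : 'rV[R]_m) := (v *m v^T) 0 0.
Let qform (v : 'rV[R]_m) := (v *m inv_spectral *m v^T) 0 0.

Lemma sqn_ge0 (v : 'rV[R]_m) : 0 <= sqn v.
Proof. by rewrite /sqn row_sqnorm sum_sqr_ge0. Qed.

Lemma lambda_k1_gt0 : 0 < lambda k.+1.
Proof. exact: lambda_gt0. Qed.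

Lemma lambda_k1_le_m : lambda k.+1 <= lambda m.
Proof. exact: lambda_mono. Qed.

(* Step 2.  For v orthogonal to the columns of U, t_j^2 <= S(v) |u_j - Pi_U u_j|:
   Cauchy-Schwarz gives both t_j^2 <= S |w_j|^2 and t_j^2 <= S |u_j|^2 = S. *)
Lemma coord_sq_le_residual (v : 'rV[R]_m) (j : 'I_m) : v *m U = 0 ->
  coord v j ^+ 2 <= sqn v * norm2 (u j.+1 - proj_col U *m u j.+1).
Proof.
move=> vU; set w := u j.+1 - proj_col U *m u j.+1.
have coord_res : coord v j = (v *m w) 0 0.
  by rewrite /coord coord_eigbasis /w mulmxBr /proj_col !mulmxA vU !mul0mx subr0.
have w_sqn : norm2 w ^+ 2 = \sum_i w i 0 ^+ 2 by rewrite sqr_sqrtr ?sum_sqr_ge0.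
have le_res : coord v j ^+ 2 <= sqn v * norm2 w ^+ 2.
  rewrite coord_res w_sqn /sqn row_sqnorm mxE.
  exact: (cauchy_schwarz_sum (fun i => v 0 i) (fun i => w i 0)).
have le_sqn : coord v j ^+ 2 <= sqn v.
  rewrite /coord coord_eigbasis /sqn row_sqnorm mxE -[leRHS]mulr1 -(eigvec_sqnorm j).
  exact: (cauchy_schwarz_sum (fun i => v 0 i) (fun i => u j.+1 i 0)).
have w_ge0 : 0 <= norm2 w by exact: sqrtr_ge0.
have S_ge0 := sqn_ge0 v.
have [w_le1|w_gt1] := lerP (norm2 w) 1.
  by apply: (le_trans le_res); apply: ler_wpM2l => //; nra.
by apply: (le_trans le_sqn); rewrite -{1}[sqn v]mulr1 ler_wpM2l // ltW.
Qed.

Lemma small_coord_bound (v : 'rV[R]_m) (j : 'I_m) : v *m U = 0 -> (j < k)%N ->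
  coord v j ^+ 2 / lambda j.+1 <= 2 * c * sqn v / lambda k.+1.
Proof.
move=> vU j_lt_k.
have lj_gt0 : 0 < lambda j.+1 := @lambda_gt0 j.+1 (ltn_ord j).
have lj_le_k : lambda j.+1 <= lambda k := @lambda_mono j.+1 k isT j_lt_k (ltnW k_lt_m).
have lj_le_k1 : lambda j.+1 <= lambda k.+1 := @lambda_mono j.+1 k.+1 isT (ltnW j_lt_k) k_lt_m.
have [g_ge0 g_le1 g_div] := gamma_bounds lj_gt0 (le_trans lj_le_k lambda_k_le_half)
  lj_le_k1 (le_trans lambda_k1_le_m lambda_m_le1).
set g := _ / _ in g_ge0 g_le1 g_div.
have res_le : norm2 (u j.+1 - proj_col U *m u j.+1) <= g * c.
  apply: (le_trans (@approx_u j.+1 j_lt_k)); apply: ler_wpM2r => //.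
  by rewrite exprS -[leRHS]mulr1 ler_wpM2l // exprn_ile1.
have inv_lj_ge0 : 0 <= (lambda j.+1)^-1 by rewrite invr_ge0 ltW.
apply: (le_trans (ler_wpM2r inv_lj_ge0 (coord_sq_le_residual v j vU))).
apply: (@le_trans _ _ (sqn v * (g * c) / lambda j.+1)).
  by apply: ler_wpM2r => //; apply: ler_wpM2l => //; exact: sqn_ge0.
have -> : sqn v * (g * c) / lambda j.+1 = sqn v * c * (g / lambda j.+1) by ring.
apply: (@le_trans _ _ (sqn v * c * (2 / lambda k.+1))); last first.
  by rewrite le_eqVlt; apply/orP; left; apply/eqP; ring.
by apply: ler_wpM2l => //; apply: mulr_ge0 => //; exact: sqn_ge0.
Qed.

(* Bound on every term of T(v): the large eigenvalues (j > k) satisfy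
   t_j^2 / l_j <= t_j^2 / l_{k+1}, the small ones are bounded above. *)
Lemma coord_bound (v : 'rV[R]_m) (j : 'I_m) : v *m U = 0 ->
  coord v j ^+ 2 / lambda j.+1 <=
  coord v j ^+ 2 / lambda k.+1 + 2 * c * sqn v / lambda k.+1.
Proof.
move=> vU.
have t_ge0 : 0 <= coord v j ^+ 2 by exact: sqr_ge0.
have lk1 := lambda_k1_gt0.
have [j_lt_k|k_le_j] := ltnP j k.
  have : 0 <= coord v j ^+ 2 / lambda k.+1 by rewrite divr_ge0 // ltW.
  by have := small_coord_bound v j vU j_lt_k; lra.
have : 0 <= 2 * c * sqn v / lambda k.+1.
  by rewrite divr_ge0 ?mulr_ge0 ?sqn_ge0 // ltW.
suff : coord v j ^+ 2 / lambda j.+1 <= coord v j ^+ 2 / lambda k.+1 by lra.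
apply: ler_wpM2l => //; rewrite lef_pV2 ?posrE //.
  exact: @lambda_mono k.+1 j.+1 isT k_le_j (ltn_ord j).
exact: @lambda_gt0 j.+1 (ltn_ord j).
Qed.


Lemma sqn_gt0 (v : 'rV[R]_m) : v != 0 -> 0 < sqn v.
Proof.
move=> v_neq0; rewrite lt_def sqn_ge0 andbT /sqn row_sqnorm.
apply: contra v_neq0 => /eqP /psumr_eq0P v_sq0; apply/eqP/matrixP => i j.
rewrite (ord1 i) mxE; apply/eqP; rewrite -sqrf_eq0; apply/eqP.
by apply: v_sq0 => // l _; exact: sqr_ge0.
Qed.

Lemma qform_lower (v : 'rV[R]_m) : sqn v / lambda m <= qform v.
Proof.
rewrite /qform inv_form_coord /sqn sqnorm_coord mulr_suml; apply: ler_sum => j _.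
apply: ler_wpM2l; first exact: sqr_ge0.
rewrite lef_pV2 ?posrE ?(@lambda_gt0 j.+1 (ltn_ord j)) ?(@lambda_gt0 m) //.
- exact: @lambda_mono j.+1 m isT (ltn_ord j) (leqnn m).
- by rewrite leqnn andbT (leq_ltn_trans _ k_lt_m).
Qed.

Lemma qform_upper (v : 'rV[R]_m) : v *m U = 0 ->
  qform v <= sqn v * (1 + 2 * m%:R * c) / lambda k.+1.
Proof.
move=> vU; rewrite /qform inv_form_coord.
apply: (@le_trans _ _ (\sum_(j < m) (coord v j ^+ 2 / lambda k.+1
                                     + 2 * c * sqn v / lambda k.+1))).
  by apply: ler_sum => j _; exact: coord_bound.
rewrite big_split /= -mulr_suml -sqnorm_coord sumr_const card_ord.
rewrite -[X in _ + X]mulr_natl /sqn le_eqVlt; apply/orP; left; apply/eqP.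
by field; rewrite gt_eqF ?lambda_k1_gt0.
Qed.

Lemma eigval_bounds (a : R) : eigenvalue (defl_prec B U *m B) a -> a != 0 ->
  lambda k.+1 / (1 + 2 * m%:R * c) <= a /\ a <= lambda m.
Proof.
move=> /eigenvalueP [v eig_v v_neq0] a_neq0.
have [vU rayleigh] := deflated_left_eigvec _ _ eig_v a_neq0.
have sqn_a : sqn v = a * qform v by rewrite /sqn rayleigh mxE.
have S_gt0 := sqn_gt0 _ v_neq0.
have lm_gt0 : 0 < lambda m := lt_le_trans lambda_k1_gt0 lambda_k1_le_m.
have lower := qform_lower v; have upper := qform_upper _ vU.
have T_gt0 : 0 < qform v by apply: lt_le_trans lower; apply: divr_gt0.
have aE : a = sqn v / qform v by rewrite sqn_a mulfK // gt_eqF.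
have D_gt0 : 0 < 1 + 2 * m%:R * c by rewrite ltr_wpDr ?mulr_ge0.
split; rewrite aE.
  rewrite ler_pdivrMr // mulrAC ler_pdivlMr //.
  by rewrite ler_pdivlMr ?lambda_k1_gt0 // in upper; rewrite mulrC.
by rewrite ler_pdivrMr //; rewrite ler_pdivrMr // in lower; rewrite mulrC.
Qed.

(* Deterministic form of the proposition:
   sqrt (kappa_eff (P B)) <= (1 + m c) sqrt (l_m / l_{k+1}).  If P B has no
   nonzero eigenvalue, kappa_eff is 0 by the conventions of inf and division. *)
Lemma sqrt_kappa_bound :
  Num.sqrt (kappa_eff (defl_prec B U *m B))
  <= (1 + m%:R * c) * Num.sqrt (lambda m / lambda k.+1).
Proof.
have lk1 := lambda_k1_gt0.
have lm_gt0 : 0 < lambda m := lt_le_trans lk1 lambda_k1_le_m.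
have mc_ge0 : 0 <= m%:R * c by rewrite mulr_ge0.
rewrite /kappa_eff; set Eig := [set a | eigenvalue _ a]; set Eig0 := [set a | _ /\ _].
have [[a0 [a0_eig a0_neq0]] | no_nonzero] := pselect (exists a, Eig0 a); last first.
  have -> : Eig0 = set0.
    by apply/funext => a; apply/propext; split => // Ha; apply: no_nonzero; exists a.
  by rewrite inf0 invr0 mulr0 sqrtr0 mulr_ge0 ?sqrtr_ge0 ?addr_ge0.
set D := 1 + 2 * m%:R * c.
have D_gt0 : 0 < D by rewrite ltr_wpDr ?mulr_ge0.
have L_gt0 : 0 < lambda k.+1 / D by rewrite divr_gt0.
have inf_ge : lambda k.+1 / D <= inf Eig0.
  apply: lb_le_inf; first by exists a0.
  by move=> a [a_eig a_neq0]; exact: (eigval_bounds _ a_eig a_neq0).1.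
have sup_le : sup Eig <= lambda m.
  apply: ge_sup; first by exists a0.
  move=> a a_eig; have [->|a_neq0] := eqVneq a 0; first exact: ltW.
  exact: (eigval_bounds _ a_eig a_neq0).2.
have kappa_le : sup Eig / inf Eig0 <= D * (lambda m / lambda k.+1).
  apply: (@le_trans _ _ (lambda m / inf Eig0)).
    by apply: ler_wpM2r; rewrite // invr_ge0 ltW // (lt_le_trans L_gt0).
  apply: (@le_trans _ _ (lambda m / (lambda k.+1 / D))).
    apply: ler_wpM2l; first exact: ltW.
    by rewrite lef_pV2 ?posrE // (lt_le_trans L_gt0).
  by rewrite le_eqVlt; apply/orP; left; apply/eqP; field; rewrite !gt_eqF.
apply: (@le_trans _ _ (Num.sqrt (D * (lambda m / lambda k.+1)))).
  exact: ler_wsqrtr.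
rewrite sqrtrM; last exact: ltW.
apply: ler_wpM2r; first exact: sqrtr_ge0.
by rewrite /D -mulrA; exact: sqrt_1_add2_le.
Qed.

End Approximation.

End Deflation.

End Spectral.

(* Monotonicity of the integral when only the upper function is measurable:
   every simple function below f is almost everywhere below g.  This avoids
   proving measurability of x |-> sqrt (kappa_eff (P(x) B)). *)
Lemma ge0_integral_le_ae {R : realType} {d : measure_display} {T : measurableType d}
    (mu : {measure set T -> \bar R}) (f g : T -> \bar R) :
  (forall x, 0 <= f x)%E -> (forall x, 0 <= g x)%E -> measurable_fun setT g ->
  {ae mu, forall x, f x <= g x}%E ->
  (\int[mu]_x f x <= \int[mu]_x g x)%E.
Proof.
move=> f_ge0 g_ge0 mg f_le_g; rewrite ge0_integralTE //.
apply: ge_ereal_sup => _ [h h_le_f <-].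
have := integral_nnsfun mu measurableT h; rewrite patch_setT => <-.
apply: ae_ge0_le_integral => //.
- by move=> x _; rewrite lee_fin; exact: fun_ge0.
- by apply/measurable_EFinP; exact: measurable_funP.
- by apply: filterS f_le_g => x fx_le_gx _; exact: le_trans (h_le_f x) fx_le_gx.
Qed.

Lemma expectation_affine {R : realType} {d : measure_display} {T : measurableType d}
    (P : probability T R) {c : T -> R} {a b e : R} :
  0 <= a -> 0 <= b -> measurable_fun setT c -> (forall x, 0 <= c x) ->
  (\int[P]_x (c x)%:E = e%:E)%E ->
  (\int[P]_x (a + b * c x)%:E = (a + b * e)%:E)%E.
Proof.
move=> a_ge0 b_ge0 mc c_ge0 Ec.
under eq_integral do rewrite EFinD EFinM.
rewrite ge0_integralD //; last 2 first.
- by move=> x _; rewrite -EFinM lee_fin mulr_ge0.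
- by apply: measurable_funeM; exact/measurable_EFinP.
rewrite integral_cst //; set total := (X in (a%:E * X)%E).
have -> : total = 1%E by exact: probability_setT.
rewrite mule1 ge0_integralZl_EFin //.
- by rewrite Ec.
- by move=> x _; rewrite lee_fin.
- exact/measurable_EFinP.
Qed.

Definition mean_c (R : realType) (m p k : nat) : R :=
  Num.sqrt (k%:R / (p%:R - 1)) +
  expR 1 * Num.sqrt ((k + p)%:R * (m - k)%:R) / p%:R.

Lemma mean_c_sqr_le (R : realType) (m p k : nat) : (2 <= p)%N ->
  mean_c R m p k ^+ 2 <=
  2 * (k%:R / (p%:R - 1)) + 2 * expR 1 ^+ 2 * ((k + p)%:R * m%:R) / p%:R ^+ 2.
Proof.
move=> p_ge2.
have p1_gt0 : 0 < p%:R - 1 :> R.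
  by rewrite subr_gt0 (_ : 1 = 1%:R) // ltr_nat.
have mk_le : (m - k)%:R <= m%:R :> R by rewrite ler_nat leq_subr.
apply: (le_trans (sqr_add_le _ _)).
rewrite sqr_sqrtr; last by rewrite divr_ge0 // ltW.
rewrite !exprMn exprVn sqr_sqrtr ?mulr_ge0 // mulrDr lerD2l !mulrA.
apply: ler_wpM2r; first by rewrite invr_ge0 exprn_ge0.
by apply: ler_wpM2l; rewrite ?mulr_ge0 ?sqr_ge0.
Qed.

Lemma c1_sqr_le (R : realType) (m p k : nat) : (2 <= p)%N ->
  (1 + m%:R * mean_c R m p k) ^+ 2 <=
  (2 + 4 * m%:R ^+ 3 * expR 1 ^+ 2 / p%:R) +
  (4 * m%:R ^+ 2 / (p%:R - 1) + 4 * m%:R ^+ 3 * expR 1 ^+ 2 / p%:R ^+ 2) * k%:R.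
Proof.
move=> p_ge2.
have p_gt0 : 0 < p%:R :> R by rewrite ltr0n (leq_trans _ p_ge2).
have p1_gt0 : 0 < p%:R - 1 :> R by rewrite subr_gt0 (_ : 1 = 1%:R) // ltr_nat.
apply: (le_trans (sqr_add_le _ _)); rewrite expr1n exprMn.
apply: (@le_trans _ _ (2 * (1 + m%:R ^+ 2 * (2 * (k%:R / (p%:R - 1)) +
   2 * expR 1 ^+ 2 * ((k + p)%:R * m%:R) / p%:R ^+ 2)))).
  rewrite ler_wpM2l // lerD2l ler_wpM2l ?sqr_ge0 //; exact: mean_c_sqr_le.
rewrite le_eqVlt; apply/orP; left; apply/eqP.
by rewrite natrD; field; rewrite !gt_eqF.
Qed.
Theorem proposition5p1 (R : realType) :
  forall (m p : nat), (2 <= p)%N ->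
  exists a0 a1 a2 a3 : R,
  forall k : nat, (1 <= k)%N -> (k < m)%N ->
  exists c1 : R,
    c1 ^+ 2 <= a0 + a1 * k%:R + a2 * k%:R ^+ 2 + a3 * k%:R ^+ 3 /\
    forall (q : nat) (d : measure_display) (T : measurableType d)
      (P : probability T R)
      (B : 'M[R]_m) (lambda : nat -> R) (u : nat -> 'cV[R]_m)
      (U : T -> 'M[R]_(m, k + p)) (c : T -> R),
      (* B symmetric positive definite *)
      B^T = B ->
      (forall x : 'cV[R]_m, x != 0 -> 0 < (x^T *m B *m x) 0 0) ->
      (* eigenpairs, 1-based: lambda_1 <= ... <= lambda_m, orthonormal u_j *)
      (forall j, (1 <= j <= m)%N -> B *m u j = lambda j *: u j) ->
      (forall i j, (1 <= i <= m)%N -> (1 <= j <= m)%N ->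
         (u i)^T *m u j = (i == j)%:R%:M) ->
      (forall i j, (1 <= i)%N -> (i <= j)%N -> (j <= m)%N -> lambda i <= lambda j) ->
      0 < lambda 1%N -> lambda m <= 1 ->
      lambda k <= 2^-1 ->
      (* randomness *)
      (forall i j, measurable_fun setT (fun x => U x i j)) ->
      measurable_fun setT c ->
      (forall x, 0 <= c x) ->
      {ae P, forall x, \rank (U x) = (k + p)%N} ->
      {ae P, forall x, forall j, (1 <= j <= k)%N ->
         norm2 (u j - proj_col (U x) *m u j) <= gammajk lambda j k ^+ q.+1 * c x} ->
      (\int[P]_x (c x)%:E =
        (Num.sqrt (k%:R / (p%:R - 1)) +
         expR 1 * Num.sqrt ((k + p)%:R * (m - k)%:R) / p%:R)%:E)%E ->
      (\int[P]_x (Num.sqrt (kappa_eff (defl_prec B (U x) *m B)))%:E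
        <= (c1 * Num.sqrt (lambda m / lambda k.+1))%:E)%E.
Proof.
move=> m p p_ge2.
exists (2 + 4 * m%:R ^+ 3 * expR 1 ^+ 2 / p%:R),
  (4 * m%:R ^+ 2 / (p%:R - 1) + 4 * m%:R ^+ 3 * expR 1 ^+ 2 / p%:R ^+ 2), 0, 0.
move=> k k_ge1 k_lt_m; exists (1 + m%:R * mean_c R m p k); split.
  by rewrite !mul0r !addr0 c1_sqr_le.
move=> q d T P B lambda u U c _ B_pd eig_u orthonormal_u lambda_mono lambda1_gt0
  lambda_m_le1 lambda_k_le_half _ mc c_ge0 U_free approx_u mean_cE.
have lambda_gt0 j : (1 <= j <= m)%N -> 0 < lambda j.
  case/andP=> j_ge1 j_le_m.
  exact: lt_le_trans lambda1_gt0 (lambda_mono 1%N j isT j_ge1 j_le_m).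
set s := Num.sqrt (lambda m / lambda k.+1).
have s_ge0 : 0 <= s by exact: sqrtr_ge0.
have ms_ge0 : 0 <= m%:R * s by rewrite mulr_ge0.
have -> : (1 + m%:R * mean_c R m p k) * s = s + m%:R * s * mean_c R m p k by ring.
rewrite -(expectation_affine P s_ge0 ms_ge0 mc c_ge0 mean_cE).
apply: ge0_integral_le_ae => //.
- by move=> x /=; rewrite lee_fin addr_ge0 ?mulr_ge0.
- apply/measurable_EFinP; apply: measurable_funD => //.
  exact: measurable_funM.
apply: filterS2 U_free approx_u => x U_free_x approx_x.
have := @sqrt_kappa_bound _ _ _ _ _ eig_u orthonormal_u lambda_gt0 _ _ B_pd U_free_x
  _ _ _ k_lt_m lambda_mono lambda_m_le1 lambda_k_le_half approx_x (c_ge0 x).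
rewrite lee_fin => /le_trans; apply.
by rewrite -/s le_eqVlt; apply/orP; left; apply/eqP; ring.
Qed.
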